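(* Under the setting of the MERL algorithm with true environment $\mu\in\mathcal M$, with $P_{\mu,\pi}$-probability at least $1-\delta/4$ we have $\mu\in\mathcal M_t$ for all time steps $t$.
   Context: Setting. $A$, $O$ are finite sets of actions and observations and $R\subset[0,1]$ a finite set of rewards. A history is a finite sequence of action/observation/reward triples; $\ell(h)$ is its length. An environment $\nu$ is a family of conditional distributions over the next (observation, reward) pair given the history and action. A policy maps finite histories to actions; policy and environment $\nu$ induce a measure $P_{\nu,\pi}$ on infinite histories. Fix $\gamma\in(0,1)$. For a history $h$ of length $t$, $V^\pi_\nu(h;d'):=\mathbf E_{\nu,\pi}[\sum_{k=0}^{d'-1}\gamma^kr_{t+1+k}\mid h]$, $V^\pi_\nu(h):=\lim_{d'\to\infty}V^\pi_\nu(h;d')$; $\pi^*_\nu$ is a fixed optimal policy for $\nu$ and $V^*_\nu:=V^{\pi^*_\nu}_\nu$. Logarithms are natural. $\mathcal M=\{\nu_1,\dots,\nu_N\}$, $\epsilon\in(0,1]$, $\delta\in(0,1)$. Constants. $d:=\lceil\frac1{1-\gamma}\log\frac{8}{(1-\gamma)\epsilon}\rceil$; $\mathcal K:=\{0,1,\dots,\lceil\log_2\frac1{\epsilon(1-\gamma)}\rceil+2\}$; $\delta_1:=\frac{\delta}{32|\mathcal K|N^{3/2}}$; $\alpha:=\frac{4\sqrt N}{4\sqrt N-1}$, $\alpha_j:=\lceil\alpha^j\rceil$. MERL algorithm. It maintains $\mathcal M_t\subseteq\mathcal M$ (initially $\mathcal M$), counters $E(\nu,\kappa)$ (initially 0)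 and statistics $X(\nu,\kappa)_i$. At each time $t$ not inside an ongoing exploration phase, with history $h$: with $\Pi:=\{\pi^*_\nu:\nu\in\mathcal M_t\}$, choose $\overline\nu,\underline\nu\in\mathcal M_t$, $\pi'\in\Pi$ maximizing $V^{\pi'}_{\overline\nu}(h;d)-V^{\pi'}_{\underline\nu}(h;d)=: \Delta$. If $\Delta>\epsilon/4$, an exploration phase starts: follow $\pi'$ for $d$ steps, with return $R=\sum_{j=0}^{d-1}\gamma^jr_{t+1+j}$; with $\kappa:=\min\{\kappa\in\mathbb N:\Delta>\epsilon2^{\kappa-2}\}$ increment $E(\overline\nu,\kappa),E(\underline\nu,\kappa)$ and record $X(\overline\nu,\kappa)_{E(\overline\nu,\kappa)}:=(1-\gamma)(V^{\pi'}_{\overline\nu}(h;d)-R)$, $X(\underline\nu,\kappa)_{E(\underline\nu,\kappa)}:=(1-\gamma)(R-V^{\pi'}_{\underline\nu}(h;d))$. Otherwise take one action $\pi^*_{\nu_i}(h)$ with $i$ minimal such that $\nu_i\in\mathcal M_t$. Whenever some $\nu\in\mathcal M_t$, $\kappa$, $j\in\mathbb N$ satisfy $E(\nu,\kappa)=\alpha_j$ and $\sum_{i=1}^{E(\nu,\kappa)}X(\nu,\kappa)_i\ge\sqrt{2E(\nu,\kappa)\log(E(\nu,\kappa)/\delta_1)}$, $\nu$ is removed. $\pi$ denotes MERL's policy and probabilities are w.r.t. $P_{\mu,\pi}$. *)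

From Stdlib Require Import Reals Lra List ClassicalEpsilon.
Import ListNotations.
Open Scope R_scope.

Definition sumL {X : Type} (l : list X) (f : X -> R) : R :=
  fold_right (fun x acc => f x + acc) 0 l.

Definition Rceil (x : R) : Z :=
  let z := up x in
  if Req_EM_T (IZR z - 1) x then (z - 1)%Z else z.

Definition log2 (x : R) : R := ln x / ln 2.

Section MERL.
Context {A Ob Rw : Type}.
Context (eO : list Ob) (eR : list Rw) (rv : Rw -> R) (gamma : R).

(* histories: action/observation/reward triples, oldest first *)
Definition hist := list (A * Ob * Rw).
(* environment: conditional probability of (o, r) given history and action *)
Definition env := hist -> A -> Ob -> Rw -> R.
Definition policy := hist -> A.

Definition is_env (nu : env) : Prop :=
  forall h a, (forall o r, 0 <= nu h a o r) /\
              sumL eO (fun o => sumL eR (fun r => nu h a o r)) = 1.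

(* V^pi_nu(h; d) = E_{nu,pi}[ sum_{k<d} gamma^k r_{t+1+k} | h ] *)
Fixpoint Vd (nu : env) (pi : policy) (h : hist) (d : nat) : R :=
  match d with
  | O => 0
  | S d' => let a := pi h in
      sumL eO (fun o => sumL eR (fun r =>
        nu h a o r * (rv r + gamma * Vd nu pi (h ++ [(a, o, r)]) d')))
  end.

(* pis is optimal for nu: V^pi_nu(h) <= V^pis_nu(h) for all pi, h,
   where V(h) = lim_{d -> oo} V(h; d) *)
Definition is_optimal (nu : env) (pis : policy) : Prop :=
  forall (pi : policy) (h : hist) (l1 l2 : R),
    Un_cv (fun d => Vd nu pi h d) l1 ->
    Un_cv (fun d => Vd nu pis h d) l2 -> l1 <= l2.

Context (envs : list env) (ps : nat -> policy) (eps delta : R)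
        (sel : hist -> list nat -> nat * nat * nat).

Definition Nenv : nat := length envs.
Definition nuI (i : nat) : env := nth i envs (fun _ _ _ _ => 0).

Definition dconst : nat :=
  Z.to_nat (Rceil (/ (1 - gamma) * ln (8 / ((1 - gamma) * eps)))).
(* |K| where K = {0, ..., ceil(log2 (1/(eps(1-gamma)))) + 2} *)
Definition Kcard : nat :=
  (Z.to_nat (Rceil (log2 (/ (eps * (1 - gamma))))) + 3)%nat.
Definition delta1 : R :=
  delta / (32 * INR Kcard * (INR Nenv * sqrt (INR Nenv))).
Definition alpha : R := 4 * sqrt (INR Nenv) / (4 * sqrt (INR Nenv) - 1).
Definition alpha_j (j : nat) : Z := Rceil (alpha ^ j).

Definition DeltaV (h : hist) (i j k : nat) : R :=
  Vd (nuI i) (ps k) h dconst - Vd (nuI j) (ps k) h dconst.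

(* kappa := min { kappa in N : DeltaV > eps 2^(kappa-2) } (searched in K) *)
Fixpoint kfind (D : R) (n fuel : nat) : nat :=
  match fuel with
  | O => n
  | S f => if Rlt_dec (eps * 2 ^ n / 4) D then n else kfind D (S n) f
  end.
Definition kappa_of (D : R) : nat := kfind D 0 Kcard.

Record phase := mkPhase {
  ph_k : nat;     (* index of the policy pi' = pi*_{nu_k} followed *)
  ph_hi : nat;
  ph_lo : nat;
  ph_kap : nat;
  ph_Vhi : R;     (* V^{pi'}_{overline nu}(h;d) at start *)
  ph_Vlo : R;     (* V^{pi'}_{underline nu}(h;d) at start *)
  ph_ret : R;
  ph_step : nat
}.

Record mstate := mkState {
  ms_M : list nat;                 (* indices of M_t *)
  ms_E : nat -> nat -> nat;
  ms_X : nat -> nat -> list R;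
  ms_ph : option phase
}.

Definition init_state : mstate :=
  mkState (seq 0 Nenv) (fun _ _ => 0%nat) (fun _ _ => []) None.

Definition decide (s : mstate) (h : hist) : A * mstate :=
  match ms_ph s with
  | Some p => (ps (ph_k p) h, s)
  | None =>
      let '(i, j, k) := sel h (ms_M s) in
      let D := DeltaV h i j k in
      if Rlt_dec (eps / 4) D then
        (ps k h, mkState (ms_M s) (ms_E s) (ms_X s)
                   (Some (mkPhase k i j (kappa_of D)
                            (Vd (nuI i) (ps k) h dconst)
                            (Vd (nuI j) (ps k) h dconst) 0 0)))
      else (ps (hd 0%nat (ms_M s)) h, s)
  end.

Definition incrE (E : nat -> nat -> nat) (i kap : nat) : nat -> nat -> nat :=
  fun v k => if (Nat.eqb v i && Nat.eqb k kap)%bool then S (E v k) else E v k.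
Definition addX (X : nat -> nat -> list R) (i kap : nat) (x : R)
  : nat -> nat -> list R :=
  fun v k => if (Nat.eqb v i && Nat.eqb k kap)%bool then X v k ++ [x] else X v k.

Definition remove_cond (E : nat -> nat -> nat) (X : nat -> nat -> list R)
  (v : nat) : bool :=
  if excluded_middle_informative
       (exists kap j : nat, Z.of_nat (E v kap) = alpha_j j /\
          sqrt (2 * INR (E v kap) * ln (INR (E v kap) / delta1))
            <= sumL (X v kap) (fun x => x))
  then true else false.

Definition update (s : mstate) (r : Rw) : mstate :=
  match ms_ph s with
  | None => s
  | Some p =>
      let ret := ph_ret p + gamma ^ (ph_step p) * rv r in
      let st := S (ph_step p) in
      if Nat.eqb st dconst then
        let kap := ph_kap p in
        let E1 := incrE (incrE (ms_E s) (ph_hi p) kap) (ph_lo p) kap in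
        let X1 := addX (addX (ms_X s) (ph_hi p) kap
                          ((1 - gamma) * (ph_Vhi p - ret)))
                       (ph_lo p) kap ((1 - gamma) * (ret - ph_Vlo p)) in
        mkState (filter (fun v => negb (remove_cond E1 X1 v)) (ms_M s))
                E1 X1 None
      else
        mkState (ms_M s) (ms_E s) (ms_X s)
          (Some (mkPhase (ph_k p) (ph_hi p) (ph_lo p) (ph_kap p)
                   (ph_Vhi p) (ph_Vlo p) ret st))
  end.

Definition step (acc : hist * mstate) (x : A * Ob * Rw) : hist * mstate :=
  let '(pre, s) := acc in
  let '(_, s1) := decide s pre in
  let '(_, _, r) := x in
  (pre ++ [x], update s1 r).

Definition merl_state (h : hist) : mstate :=
  snd (fold_left step h ([], init_state)).

Definition merl_policy : policy := fun h => fst (decide (merl_state h) h).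

Definition in_M (m : nat) (h : hist) : bool :=
  existsb (Nat.eqb m) (ms_M (merl_state h)).

(* P_{mu,pi}( nu_m in M_s for all s <= t (further steps) | h ) *)
Fixpoint Pstay (mu : env) (m : nat) (h : hist) (n : nat) : R :=
  if in_M m h then
    match n with
    | O => 1
    | S n' => let a := merl_policy h in
        sumL eO (fun o => sumL eR (fun r =>
          mu h a o r * Pstay mu m (h ++ [(a, o, r)]) n'))
    end
  else 0.

End MERL.

(* The samples recorded in X(mu, kappa) for the true environment mu are of the form
   +-(1 - gamma) (V_mu - R), where R is the return of a phase and V_mu its mu-expected
   value; so they lie in [-1, 1] and are conditionally centred under P_{mu,pi}.  By
   Hoeffding's lemma exp (lam S_c - lam^2 c / 2), with S_c the sum of the first c
   samples, is a supermartingale.  For each kappa and each checkpoint n = alpha_j, stop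
   it after n samples and scale it to start at delta1 / n, with lam chosen so that it
   is >= 1 whenever the removal test fires at E(mu, kappa) = n.  Up to time t only the
   checkpoints alpha_j <= 2t matter, and the sum over kappa <= |K| and those j is a
   nonnegative supermartingale starting below (|K| + 1) delta1 sum_j alpha^-j <= delta / 4;
   Ville's inequality bounds the probability that mu is removed. *)

From Coquelicot Require Import Coquelicot.
From Stdlib Require Import Reals List Lra Lia ZArith ClassicalEpsilon.
Import ListNotations.
Open Scope R_scope.

Lemma exp_convex_chord a b c : a < b -> b < c ->
  (c - a) * exp b <= (c - b) * exp a + (b - a) * exp c.
Proof.
  intros hab hbc.
  destruct (MVT_cor2 exp exp a b hab (fun x _ => derivable_pt_lim_exp x))
    as [c1 [e1 h1]].
  destruct (MVT_cor2 exp exp b c hbc (fun x _ => derivable_pt_lim_exp x))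
    as [c2 [e2 h2]].
  assert (exp c1 <= exp c2) by (apply Rlt_le, exp_increasing; lra).
  assert (0 <= (b - a) * (c - b) * (exp c2 - exp c1)).
  { apply Rmult_le_pos; [apply Rmult_le_pos|]; lra. }
  nra.
Qed.

Lemma exp_mul_le_cosh_sinh lam x : 0 <= lam -> -1 <= x <= 1 ->
  exp (lam * x) <= cosh lam + x * sinh lam.
Proof.
  intros hl hx; unfold cosh, sinh.
  destruct (Req_dec lam 0) as [->|hl0].
  { rewrite Rmult_0_l, Ropp_0, exp_0; lra. }
  destruct (Req_dec x 1) as [->|hx1].
  { rewrite Rmult_1_r; lra. }
  destruct (Req_dec x (-1)) as [->|hx2].
  { replace (lam * -1) with (- lam) by ring; lra. }
  pose proof (exp_convex_chord (- lam) (lam * x) lam ltac:(nra) ltac:(nra))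
    as chord.
  apply Rmult_le_reg_l with (2 * lam); [lra|].
  replace (2 * lam * ((exp lam + exp (- lam)) / 2 + x * ((exp lam - exp (- lam)) / 2)))
    with ((lam - lam * x) * exp (- lam) + (lam * x - - lam) * exp lam) by field.
  replace (2 * lam * exp (lam * x)) with ((lam - - lam) * exp (lam * x)) by ring.
  exact chord.
Qed.

Lemma sinh_le_mul_cosh x : 0 <= x -> sinh x <= x * cosh x.
Proof.
  intros hx. destruct (Req_dec x 0) as [->|hx0].
  { rewrite sinh_0; lra. }
  destruct (MVT_cor2 (fun y => y * cosh y - sinh y) (fun y => y * sinh y) 0 x
              ltac:(lra)) as [c [e hc]].
  { intros c _. apply is_derive_Reals. unfold cosh, sinh. auto_derive; auto. field. }
  assert (0 <= sinh c) by (rewrite <- sinh_0; apply Rlt_le, sinh_lt; lra).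
  rewrite sinh_0, Rmult_0_l in e.
  assert (0 <= c * sinh c * x) by (apply Rmult_le_pos; [apply Rmult_le_pos|]; lra).
  lra.
Qed.

(* The derivative of [cosh y * exp (- y^2/2)] is [(sinh y - y cosh y) exp (- y^2/2) <= 0]. *)
Lemma cosh_le_exp_half_sq lam : 0 <= lam -> cosh lam <= exp (lam ^ 2 / 2).
Proof.
  intros hl. destruct (Req_dec lam 0) as [->|hl0].
  { rewrite cosh_0. replace (0 ^ 2 / 2) with 0 by field. rewrite exp_0; lra. }
  destruct (MVT_cor2 (fun y => cosh y * exp (- (y ^ 2 / 2)))
              (fun y => (sinh y - y * cosh y) * exp (- (y ^ 2 / 2))) 0 lam ltac:(lra))
    as [c [e hc]].
  { intros c _. apply is_derive_Reals. unfold cosh, sinh. auto_derive; auto.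
    replace (c * (c * 1) * / 2) with (c ^ 2 / 2) by field. field. }
  pose proof (sinh_le_mul_cosh c ltac:(lra)).
  pose proof (exp_pos (- (c ^ 2 / 2))).
  pose proof (exp_pos (- (lam ^ 2 / 2))).
  rewrite cosh_0 in e. replace (- (0 ^ 2 / 2)) with 0 in e by field. rewrite exp_0 in e.
  assert (0 <= (c * cosh c - sinh c) * exp (- (c ^ 2 / 2)) * lam)
    by (apply Rmult_le_pos; [apply Rmult_le_pos|]; lra).
  assert (cosh lam * exp (- (lam ^ 2 / 2)) <= 1) by nra.
  assert (exp (lam ^ 2 / 2) * exp (- (lam ^ 2 / 2)) = 1)
    by (rewrite <- exp_plus, Rplus_opp_r; apply exp_0).
  nra.
Qed.

Section FiniteSums.
Context {X : Type}.

Lemma sumL_ext (l : list X) f g :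
  (forall x, In x l -> f x = g x) -> sumL l f = sumL l g.
Proof. induction l; simpl; intros H; auto. rewrite H, IHl; auto. Qed.

Lemma sumL_le (l : list X) f g :
  (forall x, In x l -> f x <= g x) -> sumL l f <= sumL l g.
Proof.
  induction l; simpl; intros H; [lra|].
  pose proof (H a (or_introl eq_refl)). pose proof (IHl (fun x h => H x (or_intror h))).
  lra.
Qed.

Lemma sumL_plus (l : list X) f g :
  sumL l (fun x => f x + g x) = sumL l f + sumL l g.
Proof. induction l; simpl; [ring|]. rewrite IHl; ring. Qed.

Lemma sumL_scal (l : list X) f (c : R) : sumL l (fun x => c * f x) = c * sumL l f.
Proof. induction l; simpl; [ring|]. rewrite IHl; ring. Qed.

Lemma sumL_const (l : list X) (c : R) : sumL l (fun _ => c) = INR (length l) * c.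
Proof. induction l; simpl length; [simpl; ring|]. rewrite S_INR; simpl; rewrite IHl; ring. Qed.

Lemma sumL_nonneg (l : list X) f : (forall x, In x l -> 0 <= f x) -> 0 <= sumL l f.
Proof.
  intros H. replace 0 with (sumL l (fun _ => 0)) by (rewrite sumL_const; ring).
  now apply sumL_le.
Qed.

Lemma sumL_ge_term (l : list X) f x :
  (forall y, In y l -> 0 <= f y) -> In x l -> f x <= sumL l f.
Proof.
  induction l as [|y l IH]; simpl; intros H Hx; [destruct Hx|].
  pose proof (sumL_nonneg l f (fun z h => H z (or_intror h))).
  pose proof (H y (or_introl eq_refl)).
  destruct Hx as [<-|Hx]; [lra|].
  pose proof (IH (fun z h => H z (or_intror h)) Hx). lra.
Qed.
End FiniteSums.

Lemma geometric_sum_le q n : 0 < q < 1 -> sumL (seq 0 n) (fun j => q ^ j) <= / (1 - q).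
Proof.
  intros hq.
  assert (Hgeo : forall a, sumL (seq a n) (fun j => q ^ j) * (1 - q) = q ^ a - q ^ (a + n)).
  { induction n as [|n IH]; intros a; simpl; [rewrite Nat.add_0_r; ring|].
    rewrite Rmult_plus_distr_r, IH, <- Nat.add_succ_comm. simpl. ring. }
  pose proof (Hgeo 0%nat). pose proof (pow_lt q n ltac:(lra)).
  apply Rmult_le_reg_r with (1 - q); [lra|]. rewrite Rinv_l; simpl in *; lra.
Qed.

Definition sumR (l : list R) : R := sumL l (fun x => x).

Lemma sumR_snoc l x : sumR (l ++ [x]) = sumR l + x.
Proof. unfold sumR. induction l; simpl; [ring|]. rewrite IHl. ring. Qed.

Section Expectation.
Context {A Ob Rw : Type} (eO : list Ob) (eR : list Rw).
Variable nu : @env A Ob Rw.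

(* The recursions defining [Vd] and [Pstay] unfold to [expect]. *)
Definition expect (h : @hist A Ob Rw) (a : A) (F : Ob -> Rw -> R) : R :=
  sumL eO (fun o => sumL eR (fun r => nu h a o r * F o r)).

Lemma expect_ext h a F G : (forall o r, F o r = G o r) -> expect h a F = expect h a G.
Proof.
  intros H. unfold expect. apply sumL_ext; intros o _. apply sumL_ext; intros r _.
  now rewrite H.
Qed.

Lemma expect_plus h a F G :
  expect h a (fun o r => F o r + G o r) = expect h a F + expect h a G.
Proof.
  unfold expect. rewrite <- sumL_plus. apply sumL_ext; intros o _.
  rewrite <- sumL_plus. apply sumL_ext; intros r _. ring.
Qed.

Lemma expect_scal h a F c : expect h a (fun o r => c * F o r) = c * expect h a F.
Proof.
  unfold expect. rewrite <- sumL_scal. apply sumL_ext; intros o _.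
  rewrite <- sumL_scal. apply sumL_ext; intros r _. ring.
Qed.

Hypothesis nu_env : is_env eO eR nu.

Lemma expect_le h a F G : (forall o r, F o r <= G o r) -> expect h a F <= expect h a G.
Proof.
  intros H. destruct (nu_env h a) as [Hpos _].
  unfold expect. apply sumL_le; intros o _. apply sumL_le; intros r _.
  now apply Rmult_le_compat_l.
Qed.

Lemma expect_const h a c : expect h a (fun _ _ => c) = c.
Proof.
  destruct (nu_env h a) as [_ Hsum].
  rewrite (expect_ext _ _ _ (fun o r => c * 1)) by (intros; ring).
  rewrite expect_scal. unfold expect.
  rewrite (sumL_ext _ _ (fun o => sumL eR (fun r => nu h a o r))), Hsum; [ring|].
  intros o _. apply sumL_ext; intros r _. ring.
Qed.

Lemma expect_nonneg h a F : (forall o r, 0 <= F o r) -> 0 <= expect h a F.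
Proof. intros H. rewrite <- (expect_const h a 0). now apply expect_le. Qed.

Lemma expect_affine h a F c0 c1 :
  expect h a (fun o r => c0 + c1 * F o r) = c0 + c1 * expect h a F.
Proof. now rewrite expect_plus, expect_const, expect_scal. Qed.

Lemma expect_sumL {I : Type} (l : list I) h a F :
  expect h a (fun o r => sumL l (fun i => F i o r)) = sumL l (fun i => expect h a (F i)).
Proof.
  induction l as [|i l IH]; simpl; [apply expect_const|].
  now rewrite expect_plus, IH.
Qed.
End Expectation.

Section PhaseMoment.
Context {A Ob Rw : Type} (eO : list Ob) (eR : list Rw) (rv : Rw -> R) (gamma : R).
Hypothesis gamma_bounds : 0 < gamma < 1.
Hypothesis rv_bounds : forall r, 0 <= rv r <= 1.

Definition geom (n : nat) : R := (1 - gamma ^ n) / (1 - gamma).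

Lemma geom_S_last n : geom (S n) = geom n + gamma ^ n.
Proof. unfold geom; simpl; field; lra. Qed.

Lemma geom_S_first n : geom (S n) = 1 + gamma * geom n.
Proof. unfold geom; simpl; field; lra. Qed.

Lemma geom_bounds n : 0 <= geom n /\ (1 - gamma) * geom n <= 1.
Proof.
  pose proof (pow_lt gamma n ltac:(lra)).
  assert (gamma ^ n <= 1).
  { destruct n; [simpl; lra|]. apply Rlt_le, pow_lt_1_compat; [lra|lia]. }
  unfold geom; split.
  - apply Rmult_le_pos; [lra|]. apply Rlt_le, Rinv_0_lt_compat; lra.
  - replace ((1 - gamma) * ((1 - gamma ^ n) / (1 - gamma))) with (1 - gamma ^ n)
      by (field; lra). lra.
Qed.

Lemma Vd_bounds (nu : @env A Ob Rw) (pol : @policy A Ob Rw) h n :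
  is_env eO eR nu -> 0 <= Vd eO eR rv gamma nu pol h n <= geom n.
Proof.
  intros Hnu. revert h. induction n as [|n IH]; intros h.
  - unfold geom; simpl. replace ((1 - 1) / (1 - gamma)) with 0 by (field; lra). lra.
  - change (Vd eO eR rv gamma nu pol h (S n)) with (expect eO eR nu h (pol h)
      (fun o r => rv r + gamma * Vd eO eR rv gamma nu pol (h ++ [(pol h, o, r)]) n)).
    split.
    + apply expect_nonneg; auto. intros o r.
      pose proof (rv_bounds r). pose proof (IH (h ++ [(pol h, o, r)])). nra.
    + rewrite <- (expect_const eO eR nu Hnu h (pol h) (geom (S n))), geom_S_first.
      apply expect_le; auto. intros o r.
      pose proof (rv_bounds r). pose proof (IH (h ++ [(pol h, o, r)])). nra.
Qed.

(* [phase_mgf nu pol sg V lam h f st ret] is the conditional expectation under [nu],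
   for a phase following [pol] that has done [st] steps with discounted return [ret]
   so far and has [f] steps to go, of [exp (lam * sg * (1 - gamma) * (V - R))],
   [R] being the final return of the phase. *)
Fixpoint phase_mgf (nu : @env A Ob Rw) (pol : @policy A Ob Rw) (sg V lam : R)
    (h : @hist A Ob Rw) (f st : nat) (ret : R) : R :=
  match f with
  | O => exp (lam * (sg * ((1 - gamma) * (V - ret))))
  | S f => expect eO eR nu h (pol h) (fun o r =>
      phase_mgf nu pol sg V lam (h ++ [(pol h, o, r)]) f (S st) (ret + gamma ^ st * rv r))
  end.

Lemma phase_mgf_nonneg nu pol sg V lam h f st ret :
  is_env eO eR nu -> 0 <= phase_mgf nu pol sg V lam h f st ret.
Proof.
  intros Hnu. revert h st ret. induction f; intros h st ret; simpl.
  - apply Rlt_le, exp_pos.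
  - now apply expect_nonneg.
Qed.

(* Hoeffding's lemma, applied along the phase: the statistic is in [[-1, 1]] and
   [exp] is dominated by its chord, which is affine in the rewards. *)
Lemma phase_mgf_le nu pol sg V lam h f st ret :
  is_env eO eR nu -> 0 <= lam -> (sg = 1 \/ sg = -1) ->
  0 <= V <= geom (st + f) -> 0 <= ret <= geom st ->
  phase_mgf nu pol sg V lam h f st ret <=
  cosh lam + sinh lam *
    (sg * ((1 - gamma) * (V - ret - gamma ^ st * Vd eO eR rv gamma nu pol h f))).
Proof.
  intros Hnu hl hsg. revert h st ret.
  induction f as [|f IH]; intros h st ret hV hret.
  - simpl. rewrite Nat.add_0_r in hV. rewrite Rmult_0_r, Rminus_0_r, (Rmult_comm (sinh lam)).
    apply exp_mul_le_cosh_sinh; auto.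
    pose proof (geom_bounds st). pose proof (pow_lt gamma st ltac:(lra)).
    assert (-1 <= (1 - gamma) * (V - ret) <= 1) by nra.
    destruct hsg as [-> | ->]; lra.
  - simpl phase_mgf.
    eapply Rle_trans.
    { apply expect_le; auto. intros o r. apply IH.
      - now replace (S st + f)%nat with (st + S f)%nat by lia.
      - pose proof (rv_bounds r). pose proof (pow_lt gamma st ltac:(lra)).
        rewrite geom_S_last. nra. }
    change (Vd eO eR rv gamma nu pol h (S f)) with (expect eO eR nu h (pol h)
      (fun o r => rv r + gamma * Vd eO eR rv gamma nu pol (h ++ [(pol h, o, r)]) f)).
    rewrite (expect_ext _ _ _ _ _ _ (fun o r =>
        (cosh lam + sinh lam * (sg * ((1 - gamma) * (V - ret)))) +
        (- (sinh lam * sg * (1 - gamma) * gamma ^ st)) *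
        (rv r + gamma * Vd eO eR rv gamma nu pol (h ++ [(pol h, o, r)]) f)))
      by (intros; simpl; ring).
    rewrite expect_affine by auto. apply Req_le; ring.
Qed.

Lemma phase_mgf_centred_le nu pol sg lam h d :
  is_env eO eR nu -> 0 <= lam -> (sg = 1 \/ sg = -1) ->
  phase_mgf nu pol sg (Vd eO eR rv gamma nu pol h d) lam h d 0 0 <= exp (lam ^ 2 / 2).
Proof.
  intros Hnu hl hsg. eapply Rle_trans.
  - apply phase_mgf_le; auto.
    + apply Vd_bounds; auto.
    + unfold geom; simpl. replace ((1 - 1) / (1 - gamma)) with 0 by (field; lra). lra.
  - simpl. replace (Vd eO eR rv gamma nu pol h d - 0 - 1 * Vd eO eR rv gamma nu pol h d)
      with 0 by ring.
    rewrite !Rmult_0_r, Rplus_0_r. now apply cosh_le_exp_half_sq.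
Qed.
End PhaseMoment.

Lemma Rceil_ge x : x <= IZR (Rceil x).
Proof.
  unfold Rceil. destruct (archimed x) as [H1 H2].
  destruct (Req_EM_T (IZR (up x) - 1) x) as [e|e]; [rewrite minus_IZR; simpl|]; lra.
Qed.

Lemma Rceil_pos x : 0 < x -> (1 <= Rceil x)%Z.
Proof.
  intros H. pose proof (Rceil_ge x). assert (0 < IZR (Rceil x)) by lra.
  apply lt_IZR in H1. lia.
Qed.

Lemma existsb_eqb_filter (x : nat) l f :
  existsb (Nat.eqb x) l = true -> existsb (Nat.eqb x) (filter f l) = false ->
  f x = false.
Proof.
  induction l as [|y l IH]; simpl; [discriminate|]. intros H1 H2.
  destruct (Nat.eqb_spec x y) as [<-|Hxy].
  - destruct (f x); [|reflexivity]. simpl in H2. now rewrite Nat.eqb_refl in H2.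
  - destruct (f y); simpl in H2; [|now apply IH].
    rewrite (proj2 (Nat.eqb_neq x y) Hxy) in H2. now apply IH.
Qed.

Section Merl.
Context {A Ob Rw : Type} (eO : list Ob) (eR : list Rw) (rv : Rw -> R)
  (gamma eps delta : R) (envs : list (@env A Ob Rw)) (ps : nat -> @policy A Ob Rw)
  (sel : @hist A Ob Rw -> list nat -> nat * nat * nat) (m : nat).
Hypothesis gamma_bounds : 0 < gamma < 1.
Hypothesis eps_bounds : 0 < eps <= 1.
Hypothesis delta_bounds : 0 < delta < 1.
Hypothesis rv_bounds : forall r, 0 <= rv r <= 1.
Hypothesis m_lt : (m < length envs)%nat.
Hypothesis mu_env : is_env eO eR (nuI envs m).

Local Notation mu := (nuI envs m).
Local Notation MS := (merl_state eO eR rv gamma envs ps eps delta sel).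
Local Notation DEC := (decide eO eR rv gamma envs ps eps sel).
Local Notation UPD := (update rv gamma envs eps delta).
Local Notation STEP := (step eO eR rv gamma envs ps eps delta sel).
Local Notation inM := (in_M eO eR rv gamma envs ps eps delta sel m).
Local Notation pi := (merl_policy eO eR rv gamma envs ps eps delta sel).
Local Notation d := (dconst gamma eps).
Local Notation Kc := (Kcard gamma eps).
Local Notation del1 := (delta1 gamma envs eps delta).
Local Notation E := (expect eO eR mu).

Lemma merl_state_snoc h a o r : MS (h ++ [(a, o, r)]) = UPD (snd (DEC (MS h) h)) r.
Proof.
  assert (Hfold : forall g, fold_left STEP g ([], init_state envs) = (g, MS g)).
  { induction g as [|x g IH] using rev_ind; [reflexivity|].
    unfold merl_state. rewrite !fold_left_app, IH. simpl.
    destruct (DEC (MS g) g). now destruct x as [[]]. }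
  unfold merl_state at 1. rewrite fold_left_app, Hfold. simpl.
  now destruct (DEC (MS h) h).
Qed.

Lemma dconst_pos : (0 < d)%nat.
Proof.
  unfold dconst.
  enough (1 <= Rceil (/ (1 - gamma) * ln (8 / ((1 - gamma) * eps))))%Z by lia.
  apply Rceil_pos, Rmult_lt_0_compat; [apply Rinv_0_lt_compat; lra|].
  rewrite <- ln_1. apply ln_increasing; [lra|].
  assert (0 < (1 - gamma) * eps <= 1) by (split; nra).
  apply Rlt_le_trans with 8; [lra|].
  unfold Rdiv. rewrite <- (Rmult_1_r 8) at 1. apply Rmult_le_compat_l; [lra|].
  rewrite <- Rinv_1. apply Rinv_le_contravar; lra.
Qed.

Lemma kappa_of_le D : (kappa_of gamma eps D <= Kc)%nat.
Proof.
  unfold kappa_of.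
  enough (Hfind : forall n f, (kfind eps D n f <= n + f)%nat) by apply (Hfind 0%nat).
  intros n f. revert n. induction f as [|f IH]; intros n; simpl; [lia|].
  destruct Rlt_dec; [lia|]. specialize (IH (S n)). lia.
Qed.

Record merl_wf (s : mstate) (t : nat) : Prop := {
  wf_count : forall v k, ms_E s v k = length (ms_X s v k);
  wf_kappa : forall v k, ms_X s v k <> [] -> (k <= Kc)%nat;
  wf_samples : forall v k, (length (ms_X s v k) <= 2 * t)%nat;
  wf_phase : forall p, ms_ph s = Some p ->
    ph_hi p <> ph_lo p /\ (ph_step p < d)%nat /\ (ph_kap p <= Kc)%nat }.

Lemma merl_wf_decide s t h : merl_wf s t -> merl_wf (snd (DEC s h)) t.
Proof.
  intros HI. unfold decide.
  destruct (ms_ph s) as [p|] eqn:Hp; [exact HI|].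
  destruct (sel h (ms_M s)) as [[i j] k].
  destruct (Rlt_dec (eps / 4) (DeltaV eO eR rv gamma envs ps eps h i j k)) as [Hl|Hl];
    [|exact HI].
  destruct HI as [I1 I2 I3 _]; constructor; auto.
  intros p' [= <-]. simpl. split; [|split].
  - intros ->. unfold DeltaV in Hl. lra.
  - apply dconst_pos.
  - apply kappa_of_le.
Qed.

Lemma addX_length X i kap x v k :
  length (addX X i kap x v k) =
  (length (X v k) + if (Nat.eqb v i && Nat.eqb k kap)%bool then 1 else 0)%nat.
Proof.
  unfold addX. destruct (Nat.eqb v i && Nat.eqb k kap)%bool; [|lia].
  rewrite length_app; simpl; lia.
Qed.

Lemma merl_wf_update s t r : merl_wf s t -> merl_wf (UPD s r) (S t).
Proof.
  intros HI. unfold update.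
  destruct (ms_ph s) as [p|] eqn:Hp; destruct HI as [I1 I2 I3 I4].
  2: { constructor; auto. intros v k. specialize (I3 v k). lia. }
  destruct (I4 p Hp) as [J1 [J2 J3]].
  destruct (Nat.eqb (S (ph_step p)) d) eqn:He; constructor; simpl; try discriminate.
  - intros v k. unfold incrE. rewrite !addX_length, <- I1.
    repeat destruct (_ && _)%bool; lia.
  - intros v k Hne.
    destruct (Nat.eqb_spec k (ph_kap p)) as [->|Hk]; [assumption|].
    apply (I2 v). unfold addX in Hne. rewrite !(proj2 (Nat.eqb_neq _ _) Hk) in Hne.
    now rewrite !Bool.andb_false_r in Hne.
  - intros v k. rewrite !addX_length. specialize (I3 v k).
    repeat destruct (_ && _)%bool; lia.
  - exact I1.
  - exact I2.
  - intros v k. specialize (I3 v k). lia.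
  - intros p' [= <-]. simpl. apply Nat.eqb_neq in He. repeat split; auto; lia.
Qed.

Lemma merl_wf_state h : merl_wf (MS h) (length h).
Proof.
  induction h as [|x h IH] using rev_ind.
  - constructor; simpl; try (intros; lia); try discriminate.
    intros v k []; reflexivity.
  - destruct x as [[a o] r]. rewrite merl_state_snoc, length_app, Nat.add_1_r.
    now apply merl_wf_update, merl_wf_decide.
Qed.

Lemma Nenv_ge_1 : 1 <= INR (length envs).
Proof. apply (le_INR 1). lia. Qed.

Lemma sqrt_Nenv_ge_1 : 1 <= sqrt (INR (length envs)).
Proof. rewrite <- sqrt_1. apply sqrt_le_1; [lra|apply pos_INR|apply Nenv_ge_1]. Qed.

Lemma alpha_gt_1 : 1 < alpha envs.
Proof.
  unfold alpha, Nenv. pose proof sqrt_Nenv_ge_1.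
  apply Rmult_lt_reg_r with (4 * sqrt (INR (length envs)) - 1); [lra|].
  unfold Rdiv. rewrite Rmult_assoc, Rinv_l; lra.
Qed.

Lemma Kcard_ge_3 : 3 <= INR Kc.
Proof.
  unfold Kcard. rewrite plus_INR. simpl INR.
  pose proof (pos_INR (Z.to_nat (Rceil (log2 (/ (eps * (1 - gamma))))))). lra.
Qed.

Lemma delta1_bounds : 0 < del1 < 1.
Proof.
  unfold delta1, Nenv. pose proof Kcard_ge_3. pose proof Nenv_ge_1.
  pose proof sqrt_Nenv_ge_1.
  assert (1 <= INR (length envs) * sqrt (INR (length envs))) by nra.
  assert (96 <= 32 * INR Kc * (INR (length envs) * sqrt (INR (length envs)))) by nra.
  split; [apply Rdiv_lt_0_compat; lra|].
  apply Rmult_lt_reg_r with (32 * INR Kc * (INR (length envs) * sqrt (INR (length envs))));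
    [lra|].
  unfold Rdiv. rewrite Rmult_assoc, Rinv_l; lra.
Qed.

Lemma alpha_j_pos j : (1 <= alpha_j envs j)%Z.
Proof. apply Rceil_pos, pow_lt. pose proof alpha_gt_1. lra. Qed.

Definition alpha_nat (j : nat) : nat := Z.to_nat (alpha_j envs j).

Lemma alpha_nat_pos j : (1 <= alpha_nat j)%nat.
Proof. pose proof (alpha_j_pos j). unfold alpha_nat. lia. Qed.

Lemma alpha_nat_ge j : alpha envs ^ j <= INR (alpha_nat j).
Proof.
  unfold alpha_nat. rewrite INR_IZR_INZ, Z2Nat.id by (pose proof (alpha_j_pos j); lia).
  apply Rceil_ge.
Qed.

Definition thr (n : nat) : R := sqrt (2 * INR n * ln (INR n / del1)).
Definition lam (n : nat) : R := thr n / INR n.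
Definition offset (n : nat) : R := - lam n * thr n + lam n ^ 2 * INR n / 2.

(* The test martingale [exp (lam x - lam^2 c / 2)] of [c] samples with sum [x],
   scaled to start at [del1 / n]; [lam n] is tuned so that it reaches [1] exactly
   when [n] samples sum to the removal threshold [thr n]. *)
Definition mart (n : nat) (x : R) (c : nat) : R :=
  exp (lam n * x - lam n ^ 2 * INR c / 2 + offset n).

Lemma lam_nonneg n : (1 <= n)%nat -> 0 <= lam n.
Proof.
  intros hn. apply Rle_mult_inv_pos; [apply sqrt_pos|]. apply lt_0_INR. lia.
Qed.

Lemma exp_offset n : (1 <= n)%nat -> exp (offset n) = del1 / INR n.
Proof.
  intros hn. pose proof delta1_bounds.
  assert (hx : 1 <= INR n) by (apply (le_INR 1); lia).
  assert (hy : 1 <= INR n / del1).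
  { apply Rmult_le_reg_r with del1; [lra|].
    unfold Rdiv. rewrite Rmult_assoc, Rinv_l; lra. }
  assert (0 <= ln (INR n / del1)) by (rewrite <- ln_1; apply ln_le; lra).
  assert (Hsq : thr n * thr n = 2 * INR n * ln (INR n / del1))
    by (apply sqrt_sqrt; nra).
  assert (Hoff : offset n = - ln (INR n / del1)).
  { unfold offset, lam.
    replace (- (thr n / INR n) * thr n + (thr n / INR n) ^ 2 * INR n / 2)
      with (- (thr n * thr n) / (2 * INR n)) by (field; lra).
    rewrite Hsq. field. lra. }
  rewrite Hoff, exp_Ropp, exp_ln by lra. field. lra.
Qed.

Lemma mart_S n x c : mart n x c = mart n x (S c) * exp (lam n ^ 2 / 2).
Proof. unfold mart. rewrite <- exp_plus, S_INR. f_equal. field. Qed.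

Lemma mart_add n x c y : mart n x c * exp (lam n * y) = mart n (x + y) c.
Proof. unfold mart. rewrite <- exp_plus. f_equal. ring. Qed.

Lemma mart_ge_1 n x : (1 <= n)%nat -> thr n <= x -> 1 <= mart n x n.
Proof.
  intros hn hx. pose proof (lam_nonneg n hn).
  unfold mart, offset.
  pose proof (exp_ineq1_le (lam n * x - lam n ^ 2 * INR n / 2 +
                            (- lam n * thr n + lam n ^ 2 * INR n / 2))).
  nra.
Qed.

(* At the end of phase [p], the sample appended to [X(mu, ph_kap p)] is
   [phase_sign p * (1 - gamma) * (phase_pred p - R)], [R] being the phase's return. *)
Definition counts_for (p : phase) (k : nat) : bool :=
  (Nat.eqb (ph_kap p) k && (Nat.eqb (ph_hi p) m || Nat.eqb (ph_lo p) m))%bool.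
Definition phase_sign (p : phase) : R := if Nat.eqb (ph_hi p) m then 1 else -1.
Definition phase_pred (p : phase) : R :=
  if Nat.eqb (ph_hi p) m then ph_Vhi p else ph_Vlo p.

Definition settled (k n : nat) (s : mstate) : R :=
  mart n (sumR (firstn n (ms_X s m k))) (Nat.min (length (ms_X s m k)) n).

(* While a
   phase runs that will append a sample to [X(mu, k)], the factor of that sample is
   replaced by its conditional expectation, which makes the process a supermartingale
   at every time step and not only at phase ends. *)
Definition supmart (k n : nat) (s : mstate) (h : @hist A Ob Rw) : R :=
  match ms_ph s with
  | Some p =>
      if (Nat.ltb (length (ms_X s m k)) n && counts_for p k)%bool then
        mart n (sumR (ms_X s m k)) (S (length (ms_X s m k))) *
        phase_mgf eO eR rv gamma mu (ps (ph_k p)) (phase_sign p) (phase_pred p) (lam n)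
          h (d - ph_step p) (ph_step p) (ph_ret p)
      else settled k n s
  | None => settled k n s
  end.

Lemma supmart_nonneg k n s h : 0 <= supmart k n s h.
Proof.
  unfold supmart, settled, mart.
  destruct (ms_ph s) as [p|]; [destruct (_ && _)%bool|]; try apply Rlt_le, exp_pos.
  apply Rmult_le_pos; [apply Rlt_le, exp_pos|now apply phase_mgf_nonneg].
Qed.

Lemma supmart_start_le k n s h p :
  (1 <= n)%nat -> ms_ph s = None -> ph_step p = 0%nat -> ph_ret p = 0 ->
  ph_Vhi p = Vd eO eR rv gamma (nuI envs (ph_hi p)) (ps (ph_k p)) h d ->
  ph_Vlo p = Vd eO eR rv gamma (nuI envs (ph_lo p)) (ps (ph_k p)) h d ->
  supmart k n (mkState (ms_M s) (ms_E s) (ms_X s) (Some p)) h <= supmart k n s h.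
Proof.
  intros hn Hnone Hst Hret Hhi Hlo.
  unfold supmart; cbn [ms_ph ms_X]; rewrite Hnone.
  destruct (_ && _)%bool eqn:Hc; [|unfold settled; simpl; lra].
  apply Bool.andb_true_iff in Hc as [Hlen Hcount]. apply Nat.ltb_lt in Hlen.
  assert (Hpred : phase_pred p = Vd eO eR rv gamma mu (ps (ph_k p)) h d).
  { unfold phase_pred, counts_for in *.
    destruct (Nat.eqb_spec (ph_hi p) m) as [<-|]; [assumption|].
    apply Bool.andb_true_iff in Hcount as [_ Hcount].
    apply Bool.orb_true_iff in Hcount as [|Hlo']; [discriminate|].
    apply Nat.eqb_eq in Hlo'. now rewrite <- Hlo'. }
  unfold settled. rewrite firstn_all2, Nat.min_l, (mart_S n _ (length _)) by lia.
  apply Rmult_le_compat_l; [apply Rlt_le, exp_pos|].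
  rewrite Hst, Hret, Nat.sub_0_r, Hpred.
  apply phase_mgf_centred_le; auto; [now apply lam_nonneg|].
  unfold phase_sign. destruct (_ =? _); auto.
Qed.

Lemma supmart_decide_le k n s h :
  (1 <= n)%nat -> supmart k n (snd (DEC s h)) h <= supmart k n s h.
Proof.
  intros hn. unfold decide. destruct (ms_ph s) as [p|] eqn:Hp; [simpl; lra|].
  destruct (sel h (ms_M s)) as [[i j] kk].
  destruct (Rlt_dec _ _); [|simpl; lra].
  now apply supmart_start_le.
Qed.

Lemma samples_after_phase X p xh xl k : ph_hi p <> ph_lo p ->
  addX (addX X (ph_hi p) (ph_kap p) xh) (ph_lo p) (ph_kap p) xl m k =
  if counts_for p k then X m k ++ [if Nat.eqb (ph_hi p) m then xh else xl]
  else X m k.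
Proof.
  intros Hne. unfold addX, counts_for.
  destruct (Nat.eqb_spec m (ph_hi p)), (Nat.eqb_spec m (ph_lo p)),
    (Nat.eqb_spec k (ph_kap p)), (Nat.eqb_spec (ph_kap p) k),
    (Nat.eqb_spec (ph_hi p) m), (Nat.eqb_spec (ph_lo p) m);
    simpl; congruence.
Qed.

Lemma supmart_update_eq k n s t h a :
  merl_wf s t -> (forall p, ms_ph s = Some p -> a = ps (ph_k p) h) ->
  E h a (fun o r => supmart k n (UPD s r) (h ++ [(a, o, r)])) = supmart k n s h.
Proof.
  intros HI Ha. unfold update. cbv zeta.
  destruct (ms_ph s) as [p|] eqn:Hp.
  2: { unfold supmart. rewrite Hp. now apply expect_const. }
  destruct (wf_phase _ _ HI p Hp) as [Hne [Hstep _]]. rewrite (Ha p eq_refl).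
  unfold supmart at 2. rewrite Hp.
  destruct (Nat.eqb_spec (S (ph_step p)) d) as [Hend|Hcont].
  - destruct (Nat.ltb (length (ms_X s m k)) n && counts_for p k)%bool eqn:Hc.
    + apply Bool.andb_true_iff in Hc as [Hlen Hcount]. apply Nat.ltb_lt in Hlen.
      replace (d - ph_step p)%nat with 1%nat by lia. cbn [phase_mgf].
      rewrite <- expect_scal. apply expect_ext. intros o r.
      unfold supmart, settled. cbn [ms_ph ms_X].
      rewrite samples_after_phase, Hcount by assumption.
      rewrite firstn_all2, length_app, Nat.min_l, sumR_snoc, <- mart_add
        by (rewrite ?length_app; simpl; lia).
      rewrite Nat.add_1_r. do 3 f_equal.
      unfold phase_sign, phase_pred. destruct (ph_hi p =? m); ring.
    + rewrite <- (expect_const eO eR mu mu_env h (ps (ph_k p) h) (settled k n s)).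
      apply expect_ext. intros o r.
      unfold supmart, settled. cbn [ms_ph ms_X].
      rewrite samples_after_phase by assumption.
      destruct (counts_for p k); [|reflexivity].
      rewrite Bool.andb_true_r in Hc. apply Nat.ltb_ge in Hc.
      rewrite firstn_app, length_app, !Nat.min_r by (simpl; lia).
      now replace (n - length (ms_X s m k))%nat with 0%nat by lia; rewrite app_nil_r.
  - unfold supmart, counts_for, phase_sign, phase_pred. cbn [ms_ph ms_X ph_kap ph_hi ph_lo
      ph_k ph_Vhi ph_Vlo ph_step ph_ret].
    destruct (_ && _)%bool.
    + rewrite expect_scal. f_equal.
      now replace (d - ph_step p)%nat with (S (d - S (ph_step p))) by lia.
    + unfold settled; cbn [ms_X]; now apply expect_const.
Qed.

Definition supmart_sum (J : nat) (s : mstate) (h : @hist A Ob Rw) : R :=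
  sumL (seq 0 (S Kc)) (fun k => sumL (seq 0 (S J)) (fun j => supmart k (alpha_nat j) s h)).

Definition supmart_total (J : nat) (h : @hist A Ob Rw) : R := supmart_sum J (MS h) h.

Lemma supmart_sum_nonneg J s h : 0 <= supmart_sum J s h.
Proof. do 2 (apply sumL_nonneg; intros). apply supmart_nonneg. Qed.

Lemma decide_action s h p :
  ms_ph (snd (DEC s h)) = Some p -> fst (DEC s h) = ps (ph_k p) h.
Proof.
  unfold decide. destruct (ms_ph s) as [p0|] eqn:Hp.
  - simpl. rewrite Hp. now intros [= <-].
  - destruct (sel h (ms_M s)) as [[i j] kk]. destruct (Rlt_dec _ _); simpl.
    + now intros [= <-].
    + now rewrite Hp.
Qed.

Lemma decide_M s h : ms_M (snd (DEC s h)) = ms_M s.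
Proof.
  unfold decide. destruct (ms_ph s); [reflexivity|].
  destruct (sel h (ms_M s)) as [[i j] kk]. now destruct (Rlt_dec _ _).
Qed.

Lemma supmart_total_super J h :
  E h (pi h) (fun o r => supmart_total J (h ++ [(pi h, o, r)])) <= supmart_total J h.
Proof.
  change (pi h) with (fst (DEC (MS h) h)).
  pose proof (merl_wf_decide _ _ h (merl_wf_state h)) as HI.
  pose proof (decide_action (MS h) h) as Hact.
  set (s1 := snd (DEC (MS h) h)) in *. set (a := fst (DEC (MS h) h)) in *.
  unfold supmart_total. rewrite (expect_ext _ _ _ _ _ _
    (fun o r => supmart_sum J (UPD s1 r) (h ++ [(a, o, r)])))
    by (intros; now rewrite merl_state_snoc).
  apply Rle_trans with (supmart_sum J s1 h); unfold supmart_sum.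
  - rewrite expect_sumL by auto. apply Req_le, sumL_ext; intros k _.
    rewrite expect_sumL by auto. apply sumL_ext; intros j _.
    now apply (supmart_update_eq _ _ _ (length h)).
  - do 2 (apply sumL_le; intros). apply supmart_decide_le, alpha_nat_pos.
Qed.

Lemma supmart_le_sum J s h k j :
  (k <= Kc)%nat -> (j <= J)%nat -> supmart k (alpha_nat j) s h <= supmart_sum J s h.
Proof.
  intros Hk Hj. unfold supmart_sum.
  eapply Rle_trans; [|apply (sumL_ge_term _ _ k)].
  - apply (sumL_ge_term (seq 0 (S J)) (fun j0 => supmart k (alpha_nat j0) s h) j).
    + intros; apply supmart_nonneg.
    + apply in_seq; lia.
  - intros; apply sumL_nonneg; intros; apply supmart_nonneg.
  - apply in_seq; lia.
Qed.

Lemma removal_step h x :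
  inM h = true -> inM (h ++ [x]) = false ->
  ms_ph (MS (h ++ [x])) = None /\
  remove_cond gamma envs eps delta (ms_E (MS (h ++ [x]))) (ms_X (MS (h ++ [x]))) m = true.
Proof.
  destruct x as [[a o] r]. unfold in_M. rewrite merl_state_snoc, <- (decide_M (MS h) h).
  set (s1 := snd (DEC (MS h) h)). unfold update. cbv zeta.
  destruct (ms_ph s1) as [p|]; [|congruence].
  destruct (Nat.eqb (S (ph_step p)) d); cbn [ms_M ms_ph ms_E ms_X]; [|congruence].
  intros H1 H2. split; [reflexivity|].
  apply existsb_eqb_filter in H2; [|assumption].
  now destruct (remove_cond _ _ _ _ _ _ m).
Qed.

Lemma supmart_total_ge_1_at_removal J t h x :
  2 * INR t < alpha envs ^ S J -> (length (h ++ [x]) <= t)%nat ->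
  inM h = true -> inM (h ++ [x]) = false -> 1 <= supmart_total J (h ++ [x]).
Proof.
  intros HJ Hlen H1 H2.
  destruct (removal_step h x H1 H2) as [Hph Hrc].
  set (h' := h ++ [x]) in *.
  destruct (merl_wf_state h') as [I1 I2 I3 _].
  unfold remove_cond in Hrc.
  destruct (excluded_middle_informative _) as [[kap [j [Hj Hs]]]|]; [|discriminate].
  rewrite I1 in Hj, Hs. set (l := ms_X (MS h') m kap) in *.
  assert (Hn : alpha_nat j = length l) by (unfold alpha_nat; rewrite <- Hj; apply Nat2Z.id).
  pose proof (alpha_nat_pos j) as Hpos.
  assert (Hk : (kap <= Kc)%nat) by (apply (I2 m); intros Hnil; fold l in Hnil;
                                      rewrite Hnil in Hn; simpl in Hn; lia).
  assert (Hjj : (j <= J)%nat).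
  { destruct (le_lt_dec j J) as [|Hlt]; [assumption|exfalso].
    pose proof (Rle_pow (alpha envs) (S J) j ltac:(pose proof alpha_gt_1; lra) Hlt).
    pose proof (alpha_nat_ge j). rewrite Hn in *.
    assert (Hl : (length l <= 2 * t)%nat) by (specialize (I3 m kap); fold l in I3; lia).
    apply le_INR in Hl. rewrite mult_INR in Hl. simpl INR in Hl. lra. }
  eapply Rle_trans; [|apply (supmart_le_sum J (MS h') h' kap j Hk Hjj)].
  unfold supmart, settled. rewrite Hph. fold l. rewrite Hn, firstn_all, Nat.min_id.
  apply mart_ge_1; [lia|exact Hs].
Qed.

Lemma supmart_init k n : (1 <= n)%nat -> supmart k n (init_state envs) [] = del1 / INR n.
Proof.
  intros hn. rewrite <- exp_offset by assumption.
  unfold supmart, settled, mart, sumR. simpl. rewrite firstn_nil. simpl. f_equal. field.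
Qed.

Lemma supmart_total_init_le J : supmart_total J [] <= delta / 4.
Proof.
  pose proof delta1_bounds. pose proof alpha_gt_1.
  set (q := / alpha envs).
  assert (hq : 0 < q < 1).
  { unfold q. split; [apply Rinv_0_lt_compat; lra|].
    rewrite <- Rinv_1. apply Rinv_lt_contravar; lra. }
  assert (Hterm : forall k j, supmart k (alpha_nat j) (init_state envs) [] <= del1 * q ^ j).
  { intros k j. rewrite supmart_init by apply alpha_nat_pos.
    unfold q. rewrite pow_inv. pose proof (alpha_nat_ge j). pose proof (pow_lt (alpha envs) j ltac:(lra)).
    apply Rmult_le_compat_l; [lra|]. apply Rinv_le_contravar; lra. }
  apply Rle_trans with (INR (S Kc) * (del1 * / (1 - q))).
  - unfold supmart_total, supmart_sum. change (MS []) with (init_state envs).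
    replace (INR (S Kc) * (del1 * / (1 - q)))
      with (sumL (seq 0 (S Kc)) (fun _ => del1 * / (1 - q)))
      by (now rewrite sumL_const, length_seq).
    apply sumL_le; intros k _. eapply Rle_trans; [apply sumL_le; intros j _; apply Hterm|].
    rewrite sumL_scal. apply Rmult_le_compat_l; [lra|]. now apply geometric_sum_le.
  - assert (Hinv : / (1 - q) = 4 * sqrt (INR (length envs))).
    { unfold q, alpha, Nenv. pose proof sqrt_Nenv_ge_1. field. split; lra. }
    rewrite Hinv. unfold delta1, Nenv.
    pose proof Kcard_ge_3. pose proof Nenv_ge_1. pose proof sqrt_Nenv_ge_1.
    set (K := INR Kc) in *. set (N := INR (length envs)) in *. set (r := sqrt N) in *.
    rewrite S_INR. fold K.
    replace ((K + 1) * (delta / (32 * K * (N * r)) * (4 * r)))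
      with (delta / 4 * ((K + 1) / (2 * K * N))) by (field; repeat split; lra).
    assert ((K + 1) / (2 * K * N) <= 1).
    { apply Rmult_le_reg_r with (2 * K * N); [nra|].
      unfold Rdiv. rewrite Rmult_assoc, Rinv_l; nra. }
    nra.
Qed.

(* Ville's inequality for the nonnegative supermartingale [supmart_total J], which is
   at least [1] once [mu] has been removed (before time [t], by the choice of [J]). *)
Lemma stay_prob_ge J t n h :
  2 * INR t < alpha envs ^ S J -> (length h + n <= t)%nat ->
  (inM h = false -> 1 <= supmart_total J h) ->
  1 - supmart_total J h <= Pstay eO eR rv gamma envs ps eps delta sel mu m h n.
Proof.
  intros HJ. revert h. induction n as [|n IH]; intros h Hl Hout;
    simpl Pstay; destruct (inM h) eqn:Hin; try (specialize (Hout eq_refl); lra).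
  - pose proof (supmart_sum_nonneg J (MS h) h). unfold supmart_total. lra.
  - change (1 - supmart_total J h <=
      E h (pi h) (fun o r => Pstay eO eR rv gamma envs ps eps delta sel mu m
                               (h ++ [(pi h, o, r)]) n)).
    pose proof (supmart_total_super J h).
    apply Rle_trans with (E h (pi h) (fun o r => 1 + (-1) * supmart_total J (h ++ [(pi h, o, r)]))).
    + rewrite expect_affine by auto. lra.
    + apply expect_le; auto. intros o r.
      replace (1 + -1 * supmart_total J (h ++ [(pi h, o, r)]))
        with (1 - supmart_total J (h ++ [(pi h, o, r)])) by ring.
      apply IH; [rewrite length_app; simpl; lia|].
      intros Hf. apply (supmart_total_ge_1_at_removal J t); auto.
      rewrite length_app; simpl; lia.
Qed.

Lemma mu_stays_with_high_prob t :
  1 - delta / 4 <= Pstay eO eR rv gamma envs ps eps delta sel mu m [] t.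
Proof.
  assert (Hr : Rabs (alpha envs) > 1)
    by (pose proof alpha_gt_1; rewrite Rabs_right; lra).
  destruct (Pow_x_infinity _ Hr (2 * INR t + 1)) as [J HJ].
  specialize (HJ (S J) ltac:(lia)).
  rewrite Rabs_right in HJ by (apply Rle_ge, pow_le; pose proof alpha_gt_1; lra).
  assert (Hin : inM [] = true).
  { unfold in_M. change (MS []) with (init_state envs). simpl.
    apply existsb_exists. exists m. split; [apply in_seq; unfold Nenv; lia|].
    apply Nat.eqb_refl. }
  pose proof (stay_prob_ge J t t [] ltac:(lra) ltac:(simpl; lia)
                ltac:(rewrite Hin; discriminate)).
  pose proof (supmart_total_init_le J). lra.
Qed.
End Merl.

Theorem lemma2
  (A O Rw : Type) (eA : list A) (eO : list O) (eR : list Rw) (rv : Rw -> R)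
  (hA : NoDup eA /\ forall a : A, In a eA)
  (hO : NoDup eO /\ forall o : O, In o eO)
  (hR : NoDup eR /\ forall r : Rw, In r eR)
  (hrv : (forall r : Rw, 0 <= rv r <= 1) /\
         (forall r1 r2 : Rw, rv r1 = rv r2 -> r1 = r2))
  (gamma eps delta : R)
  (hgamma : 0 < gamma < 1) (heps : 0 < eps <= 1) (hdelta : 0 < delta < 1)
  (envs : list (@env A O Rw))
  (henvs : forall i, (i < length envs)%nat -> is_env eO eR (nuI envs i))
  (hdist : forall i j, (i < length envs)%nat -> (j < length envs)%nat ->
             nuI envs i = nuI envs j -> i = j)
  (ps : nat -> @policy A O Rw)
  (hopt : forall i, (i < length envs)%nat ->
            is_optimal eO eR rv gamma (nuI envs i) (ps i))
  (sel : @hist A O Rw -> list nat -> nat * nat * nat)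
  (hsel : forall h Sl, Sl <> [] ->
     let '(i, j, k) := sel h Sl in
     In i Sl /\ In j Sl /\ In k Sl /\
     forall i' j' k', In i' Sl -> In j' Sl -> In k' Sl ->
       DeltaV eO eR rv gamma envs ps eps h i' j' k'
         <= DeltaV eO eR rv gamma envs ps eps h i j k)
  (m : nat) (hm : (m < length envs)%nat) :
  forall t : nat,
    1 - delta / 4 <=
    Pstay eO eR rv gamma envs ps eps delta sel (nuI envs m) m [] t.
Proof.
  intros t. apply mu_stays_with_high_prob; auto. apply hrv.
Qed.
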